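(* Let $r\ge2$ and $h_a:=e_a-f_a\in\mathbb{K}[\mathcal{S}_{r+1}]$. Let $t$ be the standard Young tableau of frame $(2,1^{r-1})\vdash r+1$ whose first row is $1,\ r+1$ and whose first column is $1,2,\ldots,r$ (from top to bottom); this is the lexicographically greatest standard tableau of this frame. Then $h_a\cdot e_t=h_a$. Moreover, for every other standard tableau $t'$ of frame $(2,1^{r-1})$, $h_a\cdot e_{t'}=0$.
   Context: $\mathbb{K}\in\{\mathbb{R},\mathbb{C}\}$; group ring product $(p\cdot q)(i)=p(q(i))$. $\tilde{\mathcal S}_r=\{p\in\mathcal{S}_{r+1}:p(r+1)=r+1\}$, $e_a=\frac1{r!}\sum_{p\in\tilde{\mathcal S}_r}\mathrm{sign}(p)p$, $f_a=\frac1{(r+1)!}\sum_{p\in\mathcal{S}_{r+1}}\mathrm{sign}(p)p$. For a Young tableau $t$ (a filling of a Young frame with $1,\ldots,r+1$, each once), $\mathcal{H}_t$ and $\mathcal{V}_t$ are the groups of permutations preserving each row, respectively each column, of $t$; the Young symmetrizer is $y_t=\sum_{p\in\mathcal{H}_t}\sum_{q\in\mathcal{V}_t}\mathrm{sign}(q)\,p\cdot q$, and $e_t=\mu_ty_t$ with the nonzero constant $\mu_t$ making $e_t$ idempotent. A tableau is standard if entries increase along rows (left to right) and down columns. Lexicographic order: $t_2>t_1$ (same frame) if, reading both tableaux simultaneously row by row from left to right and top to bottom, the first position where they differ has a larger entry in $t_2$. The frame $(2,1^{r-1})$ has a first row of two boxes followed by $r-1$ rows of one box. *)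

From mathcomp Require Import all_boot all_order all_fingroup all_algebra.
From mathcomp Require Import zify.
Set Implicit Arguments.
Unset Strict Implicit.
Unset Printing Implicit Defensive.
Import GRing.Theory Num.Theory.
Local Open Scope ring_scope.

(* Group ring K[S_n]: finitely supported = all functions 'S_n -> K.
   Points {1,...,n} are represented 0-based by 'I_n. *)
Definition grp (K : numFieldType) (n : nat) := {ffun 'S_n -> K}.

Definition gelt (K : numFieldType) n (p : 'S_n) : grp K n :=
  [ffun s => (s == p)%:R].

(* Product convention of the paper: (p.q)(i) = p(q(i)), i.e. the
   composition "q first, then p", which in mathcomp is (q * p)%g.
   (a . b)(s) = sum over p.q = s of a(p) b(q); q = s * p^-1 in mathcomp. *)
Definition gmul (K : numFieldType) n (a b : grp K n) : grp K n :=
  [ffun s => \sum_(p : 'S_n) a p * b (s * p^-1)%g].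

Definition gscale (K : numFieldType) n (c : K) (a : grp K n) : grp K n :=
  [ffun s => c * a s].

Definition gsub (K : numFieldType) n (a b : grp K n) : grp K n :=
  [ffun s => a s - b s].

Definition gzero (K : numFieldType) n : grp K n := [ffun => 0].

Definition psign (K : numFieldType) n (p : 'S_n) : K := (-1) ^+ odd_perm p.

(* e_a = 1/r! sum_{p in S~_r} sign(p) p, where S~_r fixes the point r+1
   (0-based: ord_max). *)
Definition e_a (K : numFieldType) (r : nat) : grp K r.+1 :=
  [ffun p : 'S_(r.+1) => if p ord_max == ord_max then (r`!%:R)^-1 * psign K p else 0].

Definition f_a (K : numFieldType) (r : nat) : grp K r.+1 :=
  [ffun p : 'S_(r.+1) => ((r.+1)`!%:R)^-1 * psign K p].

Definition h_a (K : numFieldType) (r : nat) : grp K r.+1 :=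
  gsub (e_a K r) (f_a K r).

(* Boxes are indexed by
   'I_(r.+1) in reading order (row by row, left to right, top to bottom):
   box 0 = (row 0, col 0), box 1 = (row 0, col 1),
   box k (2 <= k <= r) = (row k-1, col 0). *)
Definition hrow r (b : 'I_(r.+1)) : nat := (nat_of_ord b).-1.
Definition hcol r (b : 'I_(r.+1)) : nat := (nat_of_ord b == 1)%N.

(* A Young tableau of this frame: a bijective filling of the boxes with
   the entries 1..r+1 (0-based: 'I_(r.+1)); T b is the entry in box b. *)
Definition tableau r := {perm 'I_(r.+1)}.

Definition row_group r (T : tableau r) : {set 'S_(r.+1)} :=
  [set p : 'S_(r.+1) | [forall i, hrow (T^-1%g (p i)) == hrow (T^-1%g i)]].
Definition col_group r (T : tableau r) : {set 'S_(r.+1)} :=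
  [set p : 'S_(r.+1) | [forall i, hcol (T^-1%g (p i)) == hcol (T^-1%g i)]].

Definition young_sym (K : numFieldType) r (T : tableau r) : grp K r.+1 :=
  [ffun s => \sum_(p in row_group T) \sum_(q in col_group T)
                if (q * p)%g == s then psign K q else 0].

Definition standard r (T : tableau r) : bool :=
  [forall b1, forall b2,
     ((hrow b1 == hrow b2) && (hcol b1 < hcol b2)%N ==> (T b1 < T b2)%N) &&
     ((hcol b1 == hcol b2) && (hrow b1 < hrow b2)%N ==> (T b1 < T b2)%N)].

Definition lex_gt r (T2 T1 : tableau r) : Prop :=
  exists b : 'I_(r.+1),
    (forall b' : 'I_(r.+1), (b' < b)%N -> T2 b' = T1 b') /\ (T1 b < T2 b)%N.

(* The tableau t: first row 1, r+1; first column 1, 2, ..., r.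
   0-based entries: box 0 -> 0, box 1 -> r, box k (k>=2) -> k-1. *)
Definition t_fun r (b : 'I_(r.+1)) : 'I_(r.+1) :=
  inord (if nat_of_ord b == 0%N then 0%N else if nat_of_ord b == 1%N then r else (nat_of_ord b).-1).
Definition t_inv r (j : 'I_(r.+1)) : 'I_(r.+1) :=
  inord (if nat_of_ord j == 0%N then 0%N else if nat_of_ord j == r then 1%N else (nat_of_ord j).+1).

Lemma t_fun_val r (b : 'I_(r.+1)) :
  nat_of_ord (t_fun b) =
  (if nat_of_ord b == 0%N then 0%N else if nat_of_ord b == 1%N then r else (nat_of_ord b).-1).
Proof.
rewrite /t_fun inordK //; have := ltn_ord b.
by case: eqP => // _; case: eqP => // _ hb; lia.
Qed.

Lemma t_inv_val r (j : 'I_(r.+1)) :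
  nat_of_ord (t_inv j) =
  (if nat_of_ord j == 0%N then 0%N else if nat_of_ord j == r then 1%N else (nat_of_ord j).+1).
Proof.
rewrite /t_inv inordK //; have := ltn_ord j.
case: eqP => // hj0; case: eqP => [hjr|hjr] hj; first by lia.
by lia.
Qed.

Lemma t_funK r : cancel (@t_fun r) (@t_inv r).
Proof.
move=> b; apply: ord_inj; rewrite t_inv_val t_fun_val.
case: b => [[|[|m]] hm] //=.
  by case: eqP => [hr|_]; [lia | rewrite eqxx].
by case: eqP => [|_]; lia.
Qed.

Definition t_hook r : tableau r := perm (can_inj (@t_funK r)).

Definition young_const (K : numFieldType) r (T : tableau r) (mu : K) : Prop :=
  mu != 0 /\
  gmul (gscale mu (young_sym K T)) (gscale mu (young_sym K T))
  = gscale mu (young_sym K T).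

Definition young_idem (K : numFieldType) r (T : tableau r) (mu : K) : grp K r.+1 :=
  gscale mu (young_sym K T).

From mathcomp Require Import all_boot all_order all_fingroup all_algebra.
From mathcomp Require Import zify ring.
Set Implicit Arguments.
Unset Strict Implicit.
Unset Printing Implicit Defensive.
Import GRing.Theory Num.Theory.
Local Open Scope ring_scope.

(* For the hook tableau t the row group is {1, (1 r+1)} and the column group is
   the stabiliser of r+1, on which h_a transforms by the sign character.  The
   term of the transposition is evaluated by counting the permutations of the
   stabiliser that send a given point to 1, which gives
   h_a y_t = (r+1) (r-1)! h_a; idempotence of e_t = mu y_t then forces
   mu (r+1) (r-1)! = 1.  A standard tableau of frame (2,1^(r-1)) has 1 in its
   corner and is t as soon as r+1 sits in box (1,2), since its first column is
   then increasing with entries 1..r.  Any other standard t' thus has a first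
   row {1, j} with j <= r; the transposition (1 j) lies in the row group of t'
   and negates h_a, so the row sum in h_a y_t' cancels. *)

Section GroupRing.
Variables (K : numFieldType) (n : nat).
Implicit Types (a b c : grp K n) (p q s : 'S_n).

Lemma gmulA a b c : gmul (gmul a b) c = gmul a (gmul b c).
Proof.
apply/ffunP => s; rewrite !ffunE.
under eq_bigr => p _ do rewrite ffunE mulr_suml.
rewrite exchange_big /=; apply: eq_bigr => u _.
rewrite ffunE mulr_sumr (reindex_inj (mulIg u)) /=.
apply: eq_bigr => v _; rewrite mulgK mulrA; congr (_ * _ * c _).
by rewrite invMg mulgA.
Qed.

Lemma gmulZr (k : K) a b : gmul a (gscale k b) = gscale k (gmul a b).
Proof.
apply/ffunP => s; rewrite !ffunE mulr_sumr; apply: eq_bigr => p _.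
by rewrite ffunE mulrCA.
Qed.

Lemma gmulZl (k : K) a b : gmul (gscale k a) b = gscale k (gmul a b).
Proof.
apply/ffunP => s; rewrite !ffunE mulr_sumr; apply: eq_bigr => p _.
by rewrite ffunE mulrA.
Qed.

Lemma gscaleA (k l : K) a : gscale k (gscale l a) = gscale (k * l) a.
Proof. by apply/ffunP => s; rewrite !ffunE mulrA. Qed.

Lemma gscale0 (k : K) : gscale k (gzero K n) = gzero K n.
Proof. by apply/ffunP => s; rewrite !ffunE mulr0. Qed.

(* [h e e] is both [k^2 h] and [h e = k h], so [k^2 = k]. *)
Lemma gmul_idem_eigen e h (k : K) :
  gmul e e = e -> gmul h e = gscale k h -> h != gzero K n -> k != 0 ->
  gmul h e = h.
Proof.
move=> ee he /eqP h0 k0.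
have [s hs|hz] := pickP (fun s => h s != 0); last first.
  by case: h0; apply/ffunP => s; rewrite ffunE; apply/eqP/negbFE/hz.
have : gmul h (gmul e e) = gmul h e by rewrite ee.
rewrite -gmulA he gmulZl he => /(congr1 (fun f : grp K n => f s)); rewrite !ffunE mulrA.
move=> /(mulIf hs) kk; have k1 : k = 1 by apply: (mulIf k0); rewrite mul1r.
by rewrite k1; apply/ffunP => x; rewrite ffunE mul1r.
Qed.

Lemma psignM p q : psign K (p * q)%g = psign K p * psign K q.
Proof. by rewrite /psign odd_permM signr_addb. Qed.

Lemma psignV p : psign K p^-1%g = psign K p.
Proof. by rewrite /psign odd_permV. Qed.

Lemma psign_tperm (x y : 'I_n) : x != y -> psign K (tperm x y) = -1.
Proof. by move=> xy; rewrite /psign odd_tperm xy. Qed.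

Lemma psignKV p s : psign K p * psign K (p^-1 * s)%g = psign K s.
Proof. by rewrite psignM psignV mulrA /psign -signr_addb addbb mul1r. Qed.

Lemma sum_perm_anti (S : {set 'S_n}) t (F : 'S_n -> K) :
  (forall p, ((p * t)%g \in S) = (p \in S)) -> (forall p, F (p * t)%g = - F p) ->
  \sum_(p in S) F p = 0.
Proof.
move=> St Ft; have e : \sum_(p in S) F p = - \sum_(p in S) F p.
  rewrite {1}(reindex_inj (mulIg t)) /= -sumrN.
  by apply: eq_big => [p|p _]; [exact: St | exact: Ft].
have : (\sum_(p in S) F p) *+ 2 == 0 by rewrite mulr2n {1}e addNr.
by rewrite mulrn_eq0 /= => /eqP.
Qed.

End GroupRing.

Lemma gmul_young_sym (K : numFieldType) r (T : tableau r) (h : grp K r.+1) s :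
  gmul h (young_sym K T) s =
  \sum_(p in row_group T) \sum_(q in col_group T) psign K q * h (p^-1 * q^-1 * s)%g.
Proof.
rewrite ffunE.
under eq_bigr => x _ do rewrite ffunE mulr_sumr;
rewrite exchange_big; apply: eq_bigr => p _.
under eq_bigr => x _ do rewrite mulr_sumr;
rewrite exchange_big; apply: eq_bigr => q _.
rewrite (bigD1 (p^-1 * q^-1 * s)%g) //= big1 ?addr0.
  by rewrite !invMg !invgK !mulgA (mulgV s) mul1g eqxx mulrC.
move=> x hx; case: eqP; rewrite ?mulr0 // => e.
have ex : (x^-1 = s^-1 * (q * p))%g by rewrite e mulKg.
by move: hx; rewrite -[x]invgK ex !invMg invgK eqxx.
Qed.

Lemma row_groupM r (T : tableau r) (p g : 'S_r.+1) :
  p \in row_group T -> g \in row_group T -> (p * g)%g \in row_group T.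
Proof.
rewrite !inE => /forallP hp /forallP hg; apply/forallP => i.
by rewrite permM (eqP (hg (p i))) hp.
Qed.

Lemma tperm_row_group r (T : tableau r) (b1 b2 : 'I_r.+1) :
  hrow b1 = hrow b2 -> tperm (T b1) (T b2) \in row_group T.
Proof.
move=> e; rewrite inE; apply/forallP => i.
by case: tpermP => [->|->|_ _]; rewrite ?permK ?e.
Qed.

Lemma h_aE (K : numFieldType) r (s : 'S_r.+1) :
  h_a K r s =
  psign K s * ((s ord_max == ord_max)%:R / r`!%:R - ((r.+1)`!%:R)^-1).
Proof. by rewrite !ffunE; case: eqP => _; rewrite ?mul0r ?mul1r; ring. Qed.

Lemma h_a_neq0 (K : numFieldType) r : h_a K r.+1 != gzero K r.+2.
Proof.
apply/eqP => /(congr1 (fun f : grp K r.+2 => f 1%g)); rewrite h_aE ffunE perm1 eqxx.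
rewrite /psign odd_perm1 mul1r mul1r; apply/eqP; rewrite subr_eq0; apply/eqP.
move/invr_inj/eqP; rewrite eqr_nat (factS r.+1) -{1}[(r.+1)`!]mul1n eqn_pmul2r ?fact_gt0 //.
Qed.

Lemma h_a_tpermMl (K : numFieldType) r (i j : 'I_r.+1) (s : 'S_r.+1) :
  i != j -> i != ord_max -> j != ord_max ->
  h_a K r (tperm i j * s)%g = - h_a K r s.
Proof.
by move=> ij im jm; rewrite !h_aE psignM psign_tperm // permM tpermD // mulN1r mulNr.
Qed.

(* Reindexing the row sum by [tperm i j], which fixes [r+1] and so negates [h_a],
   flips the sign of every term. *)
Lemma gmul_h_a_young_sym_eq0 (K : numFieldType) r (T : tableau r) (i j : 'I_r.+1) :
  i != j -> i != ord_max -> j != ord_max -> tperm i j \in row_group T ->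
  gmul (h_a K r) (young_sym K T) = gzero K r.+1.
Proof.
move=> ij im jm tH; apply/ffunP => s; rewrite gmul_young_sym ffunE exchange_big /=.
apply: big1 => q _; apply: (sum_perm_anti (t := tperm i j)) => [p|p].
  apply/idP/idP => [|/row_groupM]; last exact.
  by move=> /row_groupM /(_ tH); rewrite -mulgA tperm2 mulg1.
by rewrite invMg tpermV -!mulgA h_a_tpermMl // mulrN.
Qed.

Section PermCount.
Variable T : finType.
Implicit Types x y z : T.

Lemma card_perm_fix1 x : #|[set q : {perm T} | q x == x]| = #|T|.-1`!.
Proof.
rewrite -(cardsC1 x) -card_perm; apply: eq_card => q; rewrite inE.
apply/eqP/subsetP => [qx u|qx].
  by rewrite !inE; apply: contra => /eqP ->; rewrite qx.
by have := qx x; rewrite !inE eqxx => /contraNeq; apply.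
Qed.

Lemma card_perm_fix2 x y : x != y ->
  #|[set q : {perm T} | (q x == x) && (q y == y)]| = #|T|.-2`!.
Proof.
move=> xy; have <- : #|~: [set x; y]| = #|T|.-2.
  by have := cardsC [set x; y]; rewrite cards2 xy; lia.
rewrite -card_perm; apply: eq_card => q; rewrite inE.
apply/andP/subsetP => [[/eqP qx /eqP qy] u|qxy]; rewrite ?inE.
  by apply: contra => /orP[]/eqP ->; rewrite ?qx ?qy.
by split; apply/eqP; [have := qxy x | have := qxy y];
  rewrite !inE eqxx ?orbT => /contraNeq; apply.
Qed.

(* Right multiplication by [tperm y z] turns the perms sending [y] to [z] into
   those fixing [y]. *)
Lemma card_perm_fix_map x y z : x != y -> x != z ->
  #|[set q : {perm T} | (q x == x) && (q y == z)]| = #|T|.-2`!.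
Proof.
move=> xy xz; rewrite -(card_perm_fix2 xy) -(card_rcoset _ (tperm y z)).
apply: eq_card => q; rewrite mem_rcoset tpermV !inE !permM.
by rewrite !(canF_eq (tpermK y z)) tpermR tpermD // eq_sym.
Qed.

End PermCount.

Lemma perm_on2E (T : finType) (x y : T) (p : {perm T}) : x != y ->
  perm_on [set x; y] p = (p \in [set 1; tperm x y]%g).
Proof.
move=> xy; suff -> : [set 1; tperm x y]%g = [set u | perm_on [set x; y] u] by rewrite inE.
apply/eqP; rewrite eqEcard; apply/andP; split.
  by apply/subsetP => u; rewrite !inE => /orP[]/eqP->; [exact: perm_on1 | exact: tperm_on].
have t1 : (1 != tperm x y)%g by apply: contra xy => /eqP/permP/(_ x); rewrite perm1 tpermL => ->.
by rewrite cards2 t1 cardsE card_perm cards2 xy.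
Qed.

Section HookTableau.
Variable r : nat.
Local Notation t := (t_hook r.+1).
Local Notation tau := (tperm (ord0 : 'I_r.+2) ord_max).

Lemma t_hook_invE (j : 'I_r.+2) : (t^-1)%g j = t_inv j.
Proof.
apply: (@perm_inj _ t); rewrite permKV permE; apply: val_inj.
rewrite /= t_fun_val t_inv_val; case: j => [[|j] hj] //=.
by case: (eqVneq j r) => [->|ne]; rewrite ?eqxx //= eqSS (negPf ne).
Qed.

Lemma hcol_t_hook_inv (j : 'I_r.+2) : hcol ((t^-1)%g j) = (j == ord_max).
Proof.
rewrite /hcol t_hook_invE t_inv_val -val_eqE /=; case: j => [[|j] hj] //=.
by rewrite eqSS; case: ifP.
Qed.

Lemma hrow_t_hook_inv (j : 'I_r.+2) :
  hrow ((t^-1)%g j) = if j \in [set ord0; ord_max] then 0%N else j.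
Proof.
rewrite /hrow t_hook_invE t_inv_val !inE -!val_eqE /=; case: j => [[|j] hj] //=.
by rewrite eqSS; case: (eqVneq j r).
Qed.

Lemma col_group_t_hook : col_group t = [set q : 'S_r.+2 | q ord_max == ord_max].
Proof.
apply/setP => q; rewrite !inE; apply/forallP/eqP => [/(_ ord_max)|qm i].
  by rewrite !hcol_t_hook_inv eqxx; case: (q ord_max =P ord_max).
by rewrite (hcol_t_hook_inv (q i)) hcol_t_hook_inv -{1}qm (inj_eq perm_inj).
Qed.

Lemma row_group_t_hook : row_group t = [set 1; tau]%g.
Proof.
apply/setP => p; rewrite -perm_on2E // inE; apply/forallP/subsetP => [Hp z|Hp i].
  rewrite [z \in _]inE; apply: contraR => zout; apply/eqP.
  have := Hp z; rewrite (hrow_t_hook_inv (p z)) hrow_t_hook_inv (negPf zout).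
  case: ifP => _ /eqP hz; last exact: val_inj.
  by move: zout; rewrite (_ : z = ord0) ?inE ?eqxx //; apply: val_inj; rewrite /= -hz.
rewrite (hrow_t_hook_inv (p i)) hrow_t_hook_inv; case: (boolP (i \in _)) => iin.
  by rewrite perm_closed ?iin //; apply/subsetP.
by rewrite (out_perm _ iin) ?(negPf iin) //; apply/subsetP.
Qed.
End HookTableau.

Section HookProduct.
Variables (K : numFieldType) (r : nat).
Local Notation h := (h_a K r.+1).
Local Notation Fix := [set q : 'S_r.+2 | q ord_max == ord_max].

Lemma h_a_fixMl (q s : 'S_r.+2) : q ord_max = ord_max ->
  psign K q * h (q^-1 * s)%g = h s.
Proof.
move=> qm; have qVm : (q^-1)%g ord_max = ord_max by rewrite -{1}qm permK.
by rewrite !h_aE mulrA psignKV permM qVm.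
Qed.

Lemma h_a_tperm0Ml (q s : 'S_r.+2) :
  psign K q * h (tperm ord0 ord_max * (q^-1 * s))%g =
  - psign K s * ((q ((s^-1)%g ord_max) == ord0)%:R / (r.+1)`!%:R - ((r.+2)`!%:R)^-1).
Proof.
rewrite h_aE psignM psign_tperm // mulN1r mulNr mulrN mulrA psignKV mulNr !permM tpermR.
by rewrite (canF_eq (permK s)) (canF_eq (permKV q)) eq_sym.
Qed.

Lemma sum_fixmax_indicator (k : 'I_r.+2) :
  \sum_(q in Fix) ((q k == ord0)%:R : K) = ((k != ord_max) * r`!)%:R.
Proof.
rewrite -natr_sum; congr _%:R.
rewrite (eq_bigr (fun q : 'S_r.+2 => if q k == ord0 then 1 else 0)%N);
  last by move=> q _; case: eqP.
rewrite -big_mkcondr /= sum1dep_card; case: (eqVneq k ord_max) => [->|km].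
  by apply: eq_card0 => q; rewrite !inE; case: eqP => // ->.
rewrite eq_sym in km; have := card_perm_fix_map km (isT : ord_max != ord0 :> 'I_r.+2).
by rewrite card_ord /= mul1n => <-; apply: eq_card => q; rewrite !inE.
Qed.

Lemma gmul_h_a_young_sym_t_hook :
  gmul h (young_sym K (t_hook r.+1)) = gscale (r.+2 * r`!)%:R h.
Proof.
apply/ffunP => s; rewrite gmul_young_sym row_group_t_hook col_group_t_hook ffunE.
rewrite big_setU1 ?big_set1 /=; last first.
  by rewrite inE; apply/eqP => /permP/(_ ord0); rewrite perm1 tpermL.
transitivity ((r.+1)`!%:R * h s - psign K s *
    (((s ord_max != ord_max) * r`!)%:R / (r.+1)`!%:R - (r.+1)`!%:R / (r.+2)`!%:R)).
  congr (_ + _).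
    rewrite (eq_bigr (fun=> h s)) => [|q];
      last by rewrite invg1 mul1g inE => /eqP/h_a_fixMl.
    by rewrite sumr_const card_perm_fix1 card_ord mulr_natl.
  under eq_bigr do rewrite tpermV -mulgA h_a_tperm0Ml.
  rewrite -mulr_sumr sumrB -mulr_suml sum_fixmax_indicator sumr_const card_perm_fix1 card_ord.
  by rewrite (canF_eq (permKV s)) eq_sym -[_ *+ _]mulr_natr; ring.
rewrite !h_aE; have f0 : r`!%:R != 0 :> K by rewrite pnatr_eq0 -lt0n fact_gt0.
have r1 : 1 + r%:R != 0 :> K by rewrite addrC natr1 pnatr_eq0.
have r2 : 2 + r%:R != 0 :> K by rewrite -[2]/(2%:R) -natrD pnatr_eq0.
rewrite !factS; case: (s ord_max == ord_max); rewrite /= ?mul0n ?mul1n;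
  by field; rewrite f0 r1 r2.
Qed.
End HookProduct.

Lemma increasing_bounded_id (f : nat -> nat) n :
  (forall k, (k < n)%N -> (f k < f k.+1)%N) -> (f n <= n)%N ->
  forall k, (k <= n)%N -> f k = k.
Proof.
move=> finc fn; have lo k : (k <= n)%N -> (k <= f k)%N.
  by elim: k => // k IH kn; have := finc k kn; have := IH (ltnW kn); lia.
have hi d : (d <= n)%N -> (f (n - d) + d <= f n)%N.
  elim: d => [|d IH] dn; first by rewrite subn0 addn0.
  have := finc (n - d.+1)%N ltac:(lia); rewrite (_ : (n - d.+1).+1 = n - d)%N; last by lia.
  by have := IH (ltnW dn); lia.
by move=> k kn; have := lo k kn; have := hi (n - k)%N (leq_subr _ _); rewrite subKn //; lia.
Qed.

Section StandardHook.
Variable r : nat.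
Implicit Type T : tableau r.+1.

Definition box01 : 'I_r.+2 := inord 1.

Lemma box01E : nat_of_ord box01 = 1%N.
Proof. by rewrite inordK. Qed.

Lemma standard_row T b1 b2 : standard T ->
  hrow b1 = hrow b2 -> (hcol b1 < hcol b2)%N -> (T b1 < T b2)%N.
Proof.
move=> /forallP /(_ b1) /forallP /(_ b2) /andP[h _] e l.
by apply: (implyP h); rewrite e eqxx l.
Qed.

Lemma standard_col T b1 b2 : standard T ->
  hcol b1 = hcol b2 -> (hrow b1 < hrow b2)%N -> (T b1 < T b2)%N.
Proof.
move=> /forallP /(_ b1) /forallP /(_ b2) /andP[_ h] e l.
by apply: (implyP h); rewrite e eqxx l.
Qed.

Lemma standard_corner T : standard T -> T ord0 = ord0.
Proof.
move=> hs; have lt0 (b : 'I_r.+2) : b != ord0 -> (T ord0 < T b)%N.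
  rewrite -val_eqE /= => b0; case: (eqVneq (nat_of_ord b) 1%N) => b1.
    by apply: standard_row; rewrite // /hrow /hcol b1.
  by apply: standard_col; rewrite // /hrow /hcol /=; [case: eqP b1 | lia].
case: (eqVneq ((T^-1)%g ord0) ord0) => [e|ne]; first by rewrite -[in LHS]e permKV.
by have := lt0 _ ne; rewrite permKV ltn0.
Qed.

Lemma standard_t_hook_eq T : standard T -> T box01 = ord_max -> T = t_hook r.+1.
Proof.
move=> hs T1.
pose f k := if k == 0%N then 0%N else nat_of_ord (T (inord k.+1)).
have finc k : (k < r)%N -> (f k < f k.+1)%N.
  rewrite /f /=; case: eqP => [-> r0|k0 kr].
    rewrite -[X in (X < _)%N]/(nat_of_ord (@ord0 r.+1)) -(standard_corner hs).
    by apply: standard_col; rewrite /hrow /hcol ?inordK //=; lia.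
  by apply: standard_col; rewrite /hrow /hcol ?inordK //=; lia.
have fr : (f r <= r)%N.
  rewrite /f; case: eqP => // r0; rewrite -ltnS ltn_neqAle -ltnS ltn_ord andbT.
  apply/eqP => Tr; have : T (inord r.+1) = T box01 by rewrite T1; apply: val_inj.
  by move/perm_inj/(congr1 val) => /=; rewrite box01E inordK //; lia.
have fid := increasing_bounded_id finc fr.
apply/permP => b; apply: val_inj; rewrite permE /= t_fun_val.
case: b => [[|[|b]] hb] /=.
- by rewrite (_ : Ordinal hb = ord0) ?standard_corner //; apply: val_inj.
- by rewrite (_ : Ordinal hb = box01) ?T1 //; apply: val_inj; rewrite /= box01E.
- have := fid b.+1 ltac:(lia); rewrite /f /= (_ : inord b.+2 = Ordinal hb) //.
  by apply: val_inj; rewrite /= inordK.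
Qed.

Lemma t_hook_standard : standard (t_hook r.+1).
Proof.
apply/forallP => b1; apply/forallP => b2; rewrite !permE !t_fun_val /hrow /hcol.
case: b1 b2 => [[|[|b1]] h1] [[|[|b2]] h2] //=; rewrite ?andbF //= ?eqSS; lia.
Qed.

Lemma standard_box01_neq_max T : standard T -> T != t_hook r.+1 -> T box01 != ord_max.
Proof. by move=> hs; apply: contra => /eqP/(standard_t_hook_eq hs) ->. Qed.

Lemma lex_gt_t_hook T : standard T -> T != t_hook r.+1 -> lex_gt (t_hook r.+1) T.
Proof.
move=> hs hT; exists box01; split => [b|].
  rewrite box01E ltnS leqn0 => /eqP b0; have -> : b = ord0 by apply: val_inj.
  by rewrite (standard_corner hs) (standard_corner t_hook_standard).
rewrite permE t_fun_val box01E /= ltn_neqAle -ltnS ltn_ord andbT.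
by rewrite -[r.+1]/(nat_of_ord (@ord_max r.+1)) val_eqE standard_box01_neq_max.
Qed.
End StandardHook.

Theorem theorem4 (K : numFieldType) (r : nat) (hr : (2 <= r)%N) :
  standard (t_hook r) /\
  (forall T : tableau r, standard T -> T != t_hook r -> lex_gt (t_hook r) T) /\
  (forall mu : K, young_const (t_hook r) mu ->
     gmul (h_a K r) (young_idem (t_hook r) mu) = h_a K r) /\
  (forall (T : tableau r) (mu : K), standard T -> T != t_hook r ->
     young_const T mu -> gmul (h_a K r) (young_idem T mu) = gzero K r.+1).
Proof.
case: r hr => // r _; split; [exact: t_hook_standard | split; [exact: lex_gt_t_hook | split]].
  move=> mu [mu0 idem]; have c0 : (r.+2 * r`!)%:R != 0 :> K.
    by rewrite pnatr_eq0 muln_eq0 negb_or /= -lt0n fact_gt0.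
  apply: (gmul_idem_eigen idem _ (h_a_neq0 K r) (mulf_neq0 mu0 c0)).
  by rewrite /young_idem gmulZr gmul_h_a_young_sym_t_hook gscaleA.
move=> T mu hs hT _; rewrite /young_idem gmulZr.
rewrite (@gmul_h_a_young_sym_eq0 _ _ _ (T ord0) (T (box01 r))).
- exact: gscale0.
- by rewrite (inj_eq perm_inj) -val_eqE /= box01E.
- by rewrite (standard_corner hs).
- exact: standard_box01_neq_max.
- by apply: tperm_row_group; rewrite /hrow box01E.
Qed.
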